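(* Let $X_1\in\mathbb{R}^{n_1\times d}$, $X_2\in\mathbb{R}^{n_2\times d}$ and let $P_1=I-X_1^+X_1$, $P_2=I-X_2^+X_2$. Then for every integer $n\ge1$, $$\big\|(I-P_1)(P_2P_1)^n\big\|^2=\max_i\Big\{(\cos^2\theta_i)^{2n-1}(1-\cos^2\theta_i)\Big\},$$ where the maximum ranges over the non-zero principal angles $\theta_i\in(0,\pi/2]$ between $\mathrm{range}(X_1^\top)$ and $\mathrm{range}(X_2^\top)$ (equivalently between $\ker X_1$ and $\ker X_2$), with a maximum over the empty set being $0$.
   Context: $A^+$ is the Moore–Penrose pseudoinverse and $\|\cdot\|$ the spectral norm; $P_m$ is the orthogonal projection onto $\ker X_m$. Principal angles: for data matrices $X_1,X_2$ let $r=\min(\operatorname{rank}X_1,\operatorname{rank}X_2)$. The principal angles $0\le\theta_1\le\dots\le\theta_r\le\pi/2$ between $\mathrm{range}(X_1^\top)$ and $\mathrm{range}(X_2^\top)$ are defined recursively by $\cos\theta_i=|u_i^\top v_i|$, where $(u_i,v_i)$ maximizes $|u^\top v|$ over unit vectors $u\in\mathrm{range}(X_1^\top)$, $v\in\mathrm{range}(X_2^\top)$ with $u\perp u_j$, $v\perp v_j$ for all $j<i$. The non-zero principal angles between $\ker X_1$ and $\ker X_2$ (defined analogously) coincide with the non-zero ones between the row spaces. *)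

From HB Require Import structures.
From mathcomp Require Import all_boot all_order all_algebra.
From mathcomp Require Import all_classical all_reals.
From mathcomp Require Import trigo.
Set Implicit Arguments. Unset Strict Implicit. Unset Printing Implicit Defensive.
Import Order.TTheory GRing.Theory Num.Theory.
Local Open Scope ring_scope.
Local Open Scope classical_set_scope.

Definition dotc {R : realType} {d : nat} (x y : 'cV[R]_d) : R := (x^T *m y) 0 0.
Definition vnorm {R : realType} {d : nat} (x : 'cV[R]_d) : R := Num.sqrt (dotc x x).

Definition specnorm {R : realType} {m d : nat} (A : 'M[R]_(m, d)) : R :=
  sup [set y | exists x : 'cV[R]_d, vnorm x <= 1 /\ y = vnorm (A *m x)].

(* Xp is the Moore-Penrose pseudoinverse of X (the four Penrose equations,
   which characterize it uniquely). *)
Definition is_pinv {R : realType} {n d : nat} (X : 'M[R]_(n, d)) (Xp : 'M[R]_(d, n)) :=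
  [/\ X *m Xp *m X = X, Xp *m X *m Xp = Xp,
      (X *m Xp)^T = X *m Xp & (Xp *m X)^T = Xp *m X].

Definition mxpow {R : realType} {d : nat} (A : 'M[R]_d) (k : nat) : 'M[R]_d :=
  iter k (fun B => A *m B) 1%:M.

(* u, v : 'I_r -> R^d (r = min(rank X1, rank X2)) are principal vector pairs
   between range(X1^T) and range(X2^T), as in the recursive definition:
   u_i in range(X1^T), v_i in range(X2^T) unit vectors, u_i ⟂ u_j, v_i ⟂ v_j
   for j < i, and (u_i, v_i) maximizes |u^T v| among all such pairs. *)
Definition principal_vectors {R : realType} {n1 n2 d : nat}
  (X1 : 'M[R]_(n1, d)) (X2 : 'M[R]_(n2, d))
  (u v : 'I_(minn (\rank X1) (\rank X2)) -> 'cV[R]_d) : Prop :=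
  forall i,
    [/\ ((u i)^T <= X1)%MS, ((v i)^T <= X2)%MS, vnorm (u i) = 1 /\ vnorm (v i) = 1,
        (forall j : 'I_(minn (\rank X1) (\rank X2)), (j < i)%N -> dotc (u i) (u j) = 0 /\ dotc (v i) (v j) = 0)
      & forall x y : 'cV[R]_d,
          (x^T <= X1)%MS -> (y^T <= X2)%MS -> vnorm x = 1 -> vnorm y = 1 ->
          (forall j : 'I_(minn (\rank X1) (\rank X2)), (j < i)%N -> dotc x (u j) = 0 /\ dotc y (v j) = 0) ->
          (`|dotc x y| <= `|dotc (u i) (v i)|) ].

Definition principal_angle {R : realType} {d r : nat}
  (u v : 'I_r -> 'cV[R]_d) (i : 'I_r) : R := acos `|dotc (u i) (v i)|.
Arguments principal_vectors {R n1 n2 d} X1 X2 u v.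

From HB Require Import structures.
From mathcomp Require Import all_boot all_order all_algebra.
From mathcomp Require Import all_classical all_reals.
From mathcomp Require Import trigo.
From mathcomp Require Import ring lra zify.
Import Order.TTheory GRing.Theory Num.Theory.
Local Open Scope ring_scope.

(* Write Q_m = I - P_m for the orthogonal projection onto range(X_m^T) and
   c_i = u_i . v_i, so that cos theta_i = |c_i|.  Maximality of the i-th principal
   pair forbids any first-order gain when one of its vectors is perturbed inside its
   row space; this gives z . v_i = c_i (z . u_i) for every z in range(X1^T), i.e.
   Q1 v_i = c_i u_i, and symmetrically Q2 u_i = c_i v_i.  As r is the smaller rank,
   one of the two families spans its row space, whence Q1 Q2 = sum_i c_i u_i v_i^T.
   The vectors a_i = P1 v_i are pairwise orthogonal, |a_i|^2 = 1 - c_i^2, and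
   a_i^T P2 P1 = c_i^2 a_i^T, so (I - P1)(P2 P1)^n = - sum_i c_i^(2n-1) u_i a_i^T.
   With orthonormal u_i and orthogonal a_i its squared norm is the largest
   c_i^(4n-2) (1 - c_i^2); pairs with theta_i = 0 have c_i^2 = 1 and contribute 0. *)

Section Dotc.
Context {R : realType} {d : nat}.
Implicit Types x y z : 'cV[R]_d.

Lemma dotcE x y : dotc x y = \sum_k x k 0 * y k 0.
Proof. by rewrite /dotc mxE; apply: eq_bigr => k _; rewrite mxE. Qed.

Lemma dotcC x y : dotc x y = dotc y x.
Proof. by rewrite !dotcE; apply: eq_bigr => k _; rewrite mulrC. Qed.

Lemma dotcDl x y z : dotc (x + y) z = dotc x z + dotc y z.
Proof. by rewrite !dotcE -big_split; apply: eq_bigr => k _; rewrite mxE mulrDl. Qed.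

Lemma dotcZl a x y : dotc (a *: x) y = a * dotc x y.
Proof. by rewrite !dotcE mulr_sumr; apply: eq_bigr => k _; rewrite mxE mulrA. Qed.

Lemma dotcNl x y : dotc (- x) y = - dotc x y.
Proof. by rewrite -scaleN1r dotcZl mulN1r. Qed.

Lemma dotcBl x y z : dotc (x - y) z = dotc x z - dotc y z.
Proof. by rewrite dotcDl dotcNl. Qed.

Lemma dotcDr x y z : dotc x (y + z) = dotc x y + dotc x z.
Proof. by rewrite dotcC dotcDl !(dotcC x). Qed.

Lemma dotcZr a x y : dotc x (a *: y) = a * dotc x y.
Proof. by rewrite dotcC dotcZl dotcC. Qed.

Lemma dotcBr x y z : dotc x (y - z) = dotc x y - dotc x z.
Proof. by rewrite dotcC dotcBl !(dotcC x). Qed.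

Lemma dotc0l x : dotc 0 x = 0.
Proof. by rewrite -(scale0r 0) dotcZl mul0r. Qed.

Lemma dotc0r x : dotc x 0 = 0.
Proof. by rewrite dotcC dotc0l. Qed.

Lemma dotc_suml I (r : seq I) (P : pred I) (F : I -> 'cV[R]_d) y :
  dotc (\sum_(i <- r | P i) F i) y = \sum_(i <- r | P i) dotc (F i) y.
Proof.
apply: (big_ind2 (fun a b => dotc a y = b)) => //; first exact: dotc0l.
by move=> a b c e <- <-; rewrite dotcDl.
Qed.

Lemma dotc_sumr I (r : seq I) (P : pred I) (F : I -> 'cV[R]_d) x :
  dotc x (\sum_(i <- r | P i) F i) = \sum_(i <- r | P i) dotc x (F i).
Proof. by rewrite dotcC dotc_suml; apply: eq_bigr => i _; rewrite dotcC. Qed.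

Lemma dotc_ge0 x : 0 <= dotc x x.
Proof. by rewrite dotcE; apply: sumr_ge0 => k _; rewrite -expr2 sqr_ge0. Qed.

Lemma dotc_eq0 x : (dotc x x == 0) = (x == 0).
Proof.
apply/idP/eqP => [|->]; last by rewrite dotc0l.
rewrite dotcE psumr_eq0 => [/allP x0|k _]; last by rewrite -expr2 sqr_ge0.
apply/matrixP => k j; rewrite !mxE (ord1 j).
by have := x0 k (mem_index_enum _); rewrite -expr2 sqrf_eq0 => /eqP.
Qed.

Lemma dotc_gt0 x : (0 < dotc x x) = (x != 0).
Proof. by rewrite lt_def dotc_eq0 dotc_ge0 andbT. Qed.

Lemma dotc_CauchySchwarz x y : dotc x y ^+ 2 <= dotc x x * dotc y y.
Proof.
have [->|y0] := eqVneq y 0; first by rewrite !dotc0r expr0n mulr0.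
have yp : 0 < dotc y y by rewrite dotc_gt0.

have := dotc_ge0 (x - (dotc x y / dotc y y) *: y).
rewrite dotcBl !dotcBr !dotcZl !dotcZr (dotcC y x).
set a := dotc x x; set b := dotc x y; set c := dotc y y.
have -> : a - b / c * b - (b / c * b - b / c * (b / c * c)) = (a * c - b ^+ 2) / c.
  by field; rewrite gt_eqF.
by rewrite pmulr_lge0 ?invr_gt0 // subr_ge0.
Qed.

Lemma vnorm_eq1 x : vnorm x = 1 -> dotc x x = 1.
Proof. by move=> x1; rewrite -(sqr_sqrtr (dotc_ge0 x)) -/(vnorm x) x1 expr1n. Qed.

End Dotc.

Lemma dotc_mulmx {R : realType} {p q : nat} (M : 'M[R]_(p, q)) x y :
  dotc (M *m x) y = dotc x (M^T *m y).
Proof. by rewrite /dotc trmx_mul mulmxA. Qed.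

Section PinvProjection.
Context {R : realType} {m d : nat} {X : 'M[R]_(m, d)} {Xp : 'M[R]_(d, m)}.
Hypothesis HX : is_pinv X Xp.

Lemma pinv_proj_sym : (Xp *m X)^T = Xp *m X.
Proof. by case: HX. Qed.

Lemma coproj_sym : (1%:M - Xp *m X)^T = 1%:M - Xp *m X.
Proof. by rewrite linearB /= trmx1 pinv_proj_sym. Qed.

Lemma pinv_proj_idem : Xp *m X *m (Xp *m X) = Xp *m X.
Proof. by case: HX => _ XpXXp _ _; rewrite mulmxA XpXXp. Qed.

Lemma pinv_proj_fix (x : 'cV[R]_d) : (x^T <= X)%MS -> Xp *m X *m x = x.
Proof.
case: HX => XXpX _ _ _ /submxP[w /(congr1 trmx)]; rewrite trmxK trmx_mul => ->.
by rewrite mulmxA -pinv_proj_sym -[_ *m X^T]trmx_mul mulmxA XXpX.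
Qed.

Lemma pinv_proj_sub (x : 'cV[R]_d) : ((Xp *m X *m x)^T <= X)%MS.
Proof. by rewrite trmx_mul pinv_proj_sym mulmxA submxMl. Qed.

Lemma pinv_proj_eq {u v : 'cV[R]_d} {c : R} : (u^T <= X)%MS ->
  (forall z, (z^T <= X)%MS -> dotc z v = c * dotc z u) ->
  Xp *m X *m v = c *: u.
Proof.
move=> uX vu; set z := Xp *m X *m v - c *: u.
have zX : (z^T <= X)%MS.
  by rewrite linearB /= addmx_sub ?eqmx_opp ?pinv_proj_sub // linearZ scalemx_sub.
have Qz : dotc z (Xp *m X *m v) = dotc z v.
  by rewrite -{1}pinv_proj_sym -dotc_mulmx pinv_proj_fix.
suff /eqP : dotc z z = 0 by rewrite dotc_eq0 subr_eq0 => /eqP.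
by rewrite {2}/z dotcBr dotcZr Qz vu // subrr.
Qed.

Lemma pinv_proj_orthonormal {r} {W : 'I_r -> 'cV[R]_d} :
  (forall i, ((W i)^T <= X)%MS) -> (forall i j, dotc (W i) (W j) = (i == j)%:R) ->
  (\rank X <= r)%N -> Xp *m X = \sum_i W i *m (W i)^T.
Proof.
move=> WX W_on rkX.
pose T : 'M[R]_(r, d) := \matrix_i (W i)^T.
have TTt : T *m T^T = 1%:M.
  apply/matrixP => i j; rewrite !mxE -W_on dotcE.
  by apply: eq_bigr => k _; rewrite !mxE.
have TX : (T <= X)%MS by apply/row_subP => i; rewrite rowK.
have /submxP[K XKT] : (X <= T)%MS.
  have [_ <-] := mxrank_leqif_sup TX; rewrite eqn_leq mxrankS //=.
  by apply: (leq_trans rkX); rewrite -{1}(mxrank1 R r) -TTt mxrankM_maxl.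
have QTt : Xp *m X *m T^T = T^T.
  apply: trmx_inj; rewrite trmx_mul pinv_proj_sym trmxK.
  apply/row_matrixP => i; rewrite row_mul rowK.
  by rewrite -pinv_proj_sym -trmx_mul pinv_proj_fix.
have XpK : Xp *m K = T^T by rewrite -QTt XKT mulmxA -(mulmxA _ T) TTt mulmx1.
rewrite XKT mulmxA XpK; apply/matrixP => k l; rewrite !mxE summxE.
by apply: eq_bigr => i _; rewrite !mxE big_ord1 !mxE.
Qed.

End PinvProjection.

Lemma linear_le_quadratic_eq0 (R : realFieldType) (a K : R) :
  (forall t, 2 * t * a <= t ^+ 2 * K) -> a = 0.
Proof.
move=> H; pose s := `|K| + 1.
have s_gt0 : 0 < s by rewrite ltr_wpDl.
have := H (a / s).
have -> : 2 * (a / s) * a = 2 * a ^+ 2 * s / s ^+ 2 by field; rewrite gt_eqF.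
have -> : (a / s) ^+ 2 * K = a ^+ 2 * K / s ^+ 2 by field; rewrite gt_eqF.
rewrite ler_pM2r ?invr_gt0 ?exprn_gt0 // => aK.
have : a ^+ 2 * K <= a ^+ 2 * `|K| by rewrite ler_wpM2l ?sqr_ge0 ?ler_norm.
have := normr_ge0 K; have := sqr_ge0 a; rewrite /s in aK => a2_ge0 K_ge0 aKK.
have a2_le0 : a ^+ 2 <= 0 by nra.
by apply/eqP; rewrite -sqrf_eq0 eq_le a2_le0 sqr_ge0.
Qed.

Lemma sqr_affine_le_eq0 (R : realFieldType) (c b N : R) :
  (forall t, (c + t * b) ^+ 2 <= c ^+ 2 * (1 + t ^+ 2 * N)) -> b = 0.
Proof.
move=> H.
have cb0 : c * b = 0.
  by apply: (@linear_le_quadratic_eq0 _ _ (c ^+ 2 * N - b ^+ 2)) => t; have := H t; nra.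
have [c0|c_neq0] := eqVneq c 0.
  have := H 1; rewrite c0 expr0n /= mul0r add0r mul1r => b2_le0.
  by apply/eqP; rewrite -sqrf_eq0 eq_le b2_le0 sqr_ge0.
by move/eqP: cb0; rewrite mulf_eq0 (negbTE c_neq0) => /eqP.
Qed.

Lemma tr_combine_sub {R : realType} {m d : nat} {M : 'M[R]_(m, d)} {x y : 'cV[R]_d} t :
  (x^T <= M)%MS -> (y^T <= M)%MS -> ((x + t *: y)^T <= M)%MS.
Proof. by move=> xM yM; rewrite linearD /= linearZ /= addmx_sub // scalemx_sub. Qed.

Section PrincipalVariation.
Context {R : realType} {r d m1 m2 : nat} {A : 'M[R]_(m1, d)} {B : 'M[R]_(m2, d)}.
Context {u v : 'I_r -> 'cV[R]_d}.
Hypothesis uA : forall i, ((u i)^T <= A)%MS.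
Hypothesis vB : forall i, ((v i)^T <= B)%MS.
Hypothesis u_on : forall i j, dotc (u i) (u j) = (i == j)%:R.
Hypothesis v_on : forall i j, dotc (v i) (v j) = (i == j)%:R.
Hypothesis uv_max : forall (i : 'I_r) (x y : 'cV[R]_d), (x^T <= A)%MS -> (y^T <= B)%MS ->
  (forall j : 'I_r, (j < i)%N -> dotc x (u j) = 0 /\ dotc y (v j) = 0) ->
  dotc x y ^+ 2 <= dotc (u i) (v i) ^+ 2 * dotc x x * dotc y y.

(* Both lemmas perturb one vector of an optimal pair in an admissible direction;
   optimality kills the first-order term (sqr_affine_le_eq0). *)
Lemma principal_prev_orth (i j : 'I_r) : (j < i)%N -> dotc (u j) (v i) = 0.
Proof.
move=> ji; apply: (@sqr_affine_le_eq0 _ (dotc (u j) (v j)) _ 1) => t.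
have ij : (i == j) = false by apply/negbTE; rewrite neq_ltn ji orbT.
have perp (k : 'I_r) : (k < j)%N -> dotc (u j) (u k) = 0 /\ dotc (v j + t *: v i) (v k) = 0.
  move=> kj; rewrite u_on dotcDl dotcZl !v_on.
  have -> : (j == k) = false by apply/negbTE; rewrite neq_ltn kj orbT.
  have -> : (i == k) = false by apply/negbTE; rewrite neq_ltn (ltn_trans kj ji) orbT.
  by rewrite mulr0 addr0.
have := @uv_max j _ _ (uA j) (tr_combine_sub t (vB j) (vB i)) perp.
rewrite dotcDr dotcZr u_on eqxx !dotcDl !dotcDr !dotcZl !dotcZr !v_on eqxx ij eq_sym ij.
by rewrite eqxx /= => h; lra.
Qed.

Lemma principal_perp_orth (i : 'I_r) (w : 'cV[R]_d) : (w^T <= A)%MS ->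
  (forall k : 'I_r, (k <= i)%N -> dotc w (u k) = 0) -> dotc w (v i) = 0.
Proof.
move=> wA w_perp; apply: (@sqr_affine_le_eq0 _ (dotc (u i) (v i)) _ (dotc w w)) => t.
have perp (k : 'I_r) : (k < i)%N -> dotc (u i + t *: w) (u k) = 0 /\ dotc (v i) (v k) = 0.
  move=> ki; rewrite dotcDl dotcZl w_perp ?(ltnW ki) // u_on v_on.
  have -> : (i == k) = false by apply/negbTE; rewrite neq_ltn ki orbT.
  by rewrite mulr0 addr0.
have := @uv_max i _ _ (tr_combine_sub t (uA i) wA) (vB i) perp.
rewrite !dotcDl !dotcDr !dotcZl !dotcZr u_on v_on eqxx (dotcC (u i) w) w_perp //.
by rewrite /= => h; lra.
Qed.

Lemma principal_dotc_rowspace (i : 'I_r) (z : 'cV[R]_d) : (z^T <= A)%MS ->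
  dotc z (v i) = dotc (u i) (v i) * dotc z (u i).
Proof.
move=> zA; set S := \sum_(j : 'I_r | (j <= i)%N) dotc z (u j) *: u j.
have SA : (S^T <= A)%MS.
  by rewrite linear_sum /=; apply: summx_sub => j _; rewrite linearZ /= scalemx_sub.
have Su (k : 'I_r) : (k <= i)%N -> dotc S (u k) = dotc z (u k).
  move=> ki; rewrite /S dotc_suml (bigD1 k) //= big1 ?addr0 => [|j /andP[_ jk]].
    by rewrite dotcZl u_on eqxx mulr1.
  by rewrite dotcZl u_on (negbTE jk) mulr0.
have w_perp (k : 'I_r) : (k <= i)%N -> dotc (z + (-1) *: S) (u k) = 0.
  by move=> ki; rewrite dotcDl dotcZl Su // mulN1r subrr.
have zv := @principal_perp_orth i _ (tr_combine_sub (-1) zA SA) w_perp.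
rewrite -[z](addrNK S) -scaleN1r dotcDl zv add0r dotcDl w_perp // add0r Su // mulrC.
rewrite /S dotc_suml (bigD1 i) //= big1 ?addr0 => [|j /andP[ji jn]]; first by rewrite dotcZl.
by rewrite dotcZl principal_prev_orth ?mulr0 // ltn_neqAle jn ji.
Qed.

End PrincipalVariation.

Lemma vnorm_scale_inv {R : realType} {d : nat} (x : 'cV[R]_d) :
  x != 0 -> vnorm ((vnorm x)^-1 *: x) = 1.
Proof.
rewrite -dotc_gt0 => x_gt0.
rewrite /vnorm dotcZl dotcZr -/(vnorm x) mulrA -expr2 exprVn /vnorm.
by rewrite sqr_sqrtr ?dotc_ge0 // mulVf ?gt_eqF // sqrtr1.
Qed.

Lemma dotc_sqr_le_homog {R : realType} {d m1 m2 : nat} (A : 'M[R]_(m1, d))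
  (B : 'M[R]_(m2, d)) (P : 'cV[R]_d -> 'cV[R]_d -> Prop) (K : R) :
  (forall a b x y, 0 < a -> 0 < b -> P x y -> P (a *: x) (b *: y)) ->
  (forall x y, (x^T <= A)%MS -> (y^T <= B)%MS -> vnorm x = 1 -> vnorm y = 1 ->
      P x y -> `|dotc x y| <= K) ->
  forall x y, (x^T <= A)%MS -> (y^T <= B)%MS -> P x y ->
    dotc x y ^+ 2 <= K ^+ 2 * dotc x x * dotc y y.
Proof.
move=> PZ unit_le x y xA yB Pxy.
have [->|x0] := eqVneq x 0; first by rewrite !dotc0l expr0n /= mulr0 mul0r.
have [->|y0] := eqVneq y 0; first by rewrite !dotc0r expr0n /= mulr0.
have nx_gt0 : 0 < vnorm x by rewrite sqrtr_gt0 dotc_gt0.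
have ny_gt0 : 0 < vnorm y by rewrite sqrtr_gt0 dotc_gt0.
have ix_gt0 : 0 < (vnorm x)^-1 by rewrite invr_gt0.
have iy_gt0 : 0 < (vnorm y)^-1 by rewrite invr_gt0.
have sxA : (((vnorm x)^-1 *: x)^T <= A)%MS by rewrite linearZ scalemx_sub.
have syB : (((vnorm y)^-1 *: y)^T <= B)%MS by rewrite linearZ scalemx_sub.
have := unit_le _ _ sxA syB (vnorm_scale_inv _ x0) (vnorm_scale_inv _ y0)
  (PZ _ _ _ _ ix_gt0 iy_gt0 Pxy).
rewrite dotcZl dotcZr !normrM (ger0_norm (ltW ix_gt0)) (ger0_norm (ltW iy_gt0)).
rewrite mulrA -invfM ler_pdivrMl ?mulr_gt0 // => xy_le.
have : `|dotc x y| ^+ 2 <= (vnorm x * vnorm y * K) ^+ 2.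
  by rewrite lerXn2r // ?nnegrE ?normr_ge0 //; apply: le_trans xy_le.
by rewrite real_normK ?num_real // !exprMn /vnorm !sqr_sqrtr ?dotc_ge0 // => ?; lra.
Qed.

Lemma orthonormal_of_prev {R : realType} {d r : nat} (f : 'I_r -> 'cV[R]_d) :
  (forall i, dotc (f i) (f i) = 1) -> (forall i j : 'I_r, (j < i)%N -> dotc (f i) (f j) = 0) ->
  forall i j, dotc (f i) (f j) = (i == j)%:R.
Proof.
move=> f1 f_prev i j; have [->|] := eqVneq i j; first by rewrite f1.
by rewrite neq_ltn => /orP[ij|ji]; [rewrite dotcC|]; rewrite f_prev.
Qed.

Lemma dotc_sum_orthogonal {R : realType} {d r : nat} (f : 'I_r -> 'cV[R]_d) (a b : 'I_r -> R) :
  (forall i j, i != j -> dotc (f i) (f j) = 0) ->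
  dotc (\sum_i a i *: f i) (\sum_i b i *: f i) = \sum_i a i * b i * dotc (f i) (f i).
Proof.
move=> f_orth; rewrite dotc_suml; apply: eq_bigr => i _.
rewrite dotcZl dotc_sumr (bigD1 i) //= big1 ?addr0 ?dotcZr ?mulrA // => j ji.
by rewrite dotcZr f_orth ?mulr0 // eq_sym.
Qed.

Lemma bessel_orthogonal {R : realType} {d r : nat} (E : 'I_r -> 'cV[R]_d) (M : R) x :
  0 <= M -> (forall i j, i != j -> dotc (E i) (E j) = 0) -> (forall i, dotc (E i) (E i) <= M) ->
  \sum_i dotc (E i) x ^+ 2 <= M * dotc x x.
Proof.
move=> M_ge0 E_orth E_le; set s := \sum_i _.
pose w := \sum_i dotc (E i) x *: E i.
have ws : dotc w x = s by rewrite dotc_suml; apply: eq_bigr => i _; rewrite dotcZl expr2.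
have ww : dotc w w <= M * s.
  rewrite dotc_sum_orthogonal // mulr_sumr; apply: ler_sum => i _.
  by have := E_le i; have := sqr_ge0 (dotc (E i) x); nra.
(* s = w . x, so Cauchy-Schwarz gives s^2 <= |w|^2 |x|^2 <= M s |x|^2 *)
have ss : s * s <= M * dotc x x * s.
  by have := dotc_CauchySchwarz w x; have := dotc_ge0 x; rewrite ws; nra.
have [s_gt0|s_le0] := ltrP 0 s; first by rewrite -(ler_pM2r s_gt0).
by apply: le_trans s_le0 _; rewrite mulr_ge0 ?dotc_ge0.
Qed.

Section SpecnormSqr.
Local Open Scope classical_set_scope.

Lemma specnorm_sqr_eq {R : realType} {p d : nat} (B : 'M[R]_(p, d)) (M : R) :
  0 <= M -> (forall x, dotc (B *m x) (B *m x) <= M * dotc x x) ->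
  (exists2 x, dotc x x <= 1 & dotc (B *m x) (B *m x) = M) ->
  specnorm B ^+ 2 = M.
Proof.
move=> M_ge0 B_le [x0 x0_le1 Bx0].
set S := [set y | exists x : 'cV[R]_d, vnorm x <= 1 /\ y = vnorm (B *m x)].
have S_ub : ubound S (Num.sqrt M).
  move=> y [x [x_le1 ->]]; rewrite /vnorm ler_sqrt //.
  apply: (le_trans (B_le x)); rewrite -[leRHS]mulr1 ler_wpM2l //.
  by move: x_le1; rewrite /vnorm -{1}sqrtr1 ler_sqrt // ler01.
have S_sqrtM : S (Num.sqrt M).
  by exists x0; split; [rewrite /vnorm -sqrtr1 ler_sqrt | rewrite /vnorm Bx0].
suff -> : specnorm B = Num.sqrt M by rewrite sqr_sqrtr.
apply/eqP; rewrite eq_le; apply/andP; split; first by apply: ge_sup => //; exists (Num.sqrt M).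
by apply: sup_upper_bound => //; split; exists (Num.sqrt M).
Qed.

End SpecnormSqr.

Lemma outer_sum_mulmx {R : realType} {d r : nat} (U E : 'I_r -> 'cV[R]_d) x :
  (\sum_i U i *m (E i)^T) *m x = \sum_i dotc (E i) x *: U i.
Proof.
rewrite mulmx_suml; apply: eq_bigr => i _.
by rewrite -mulmxA [(E i)^T *m x]mx11_scalar mul_mx_scalar.
Qed.

Lemma specnorm_outer_orthogonal {R : realType} {d r : nat} (U E : 'I_r -> 'cV[R]_d) :
  (forall i j, dotc (U i) (U j) = (i == j)%:R) ->
  (forall i j, i != j -> dotc (E i) (E j) = 0) ->
  specnorm (\sum_i U i *m (E i)^T) ^+ 2 = \big[Num.max/0]_i dotc (E i) (E i).
Proof.
move=> U_on E_orth; set M := \big[Num.max/0]_i _.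
have M_ge0 : 0 <= M by exact: bigmax_ge_id.
have E_le i : dotc (E i) (E i) <= M.
  by rewrite /M; exact: (le_bigmax _ (fun i => dotc (E i) (E i))).
have normB x : dotc ((\sum_i U i *m (E i)^T) *m x) ((\sum_i U i *m (E i)^T) *m x)
    = \sum_i dotc (E i) x ^+ 2.
  rewrite outer_sum_mulmx dotc_sum_orthogonal => [|i j ij]; last by rewrite U_on (negbTE ij).
  by apply: eq_bigr => i _; rewrite U_on eqxx mulr1 expr2.
apply: specnorm_sqr_eq => // [x|]; first by rewrite normB bessel_orthogonal.
have M_attained : M = 0 \/ exists k, M = dotc (E k) (E k).
  rewrite /M; apply: (big_ind (fun y => y = 0 \/ exists k, y = dotc (E k) (E k)))
    => [|y z yP zP|k _]; [by left | by rewrite maxEle; case: ifP | by right; exists k].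
have [M0|M_neq0] := eqVneq M 0; first by exists 0; rewrite ?mulmx0 dotc0l ?ler01 ?M0.
case: M_attained => [M0|[k Mk]]; first by rewrite M0 eqxx in M_neq0.
have t2 : (Num.sqrt M)^-1 ^+ 2 = M^-1 by rewrite exprVn sqr_sqrtr.
exists ((Num.sqrt M)^-1 *: E k); first by rewrite dotcZl dotcZr mulrA -expr2 t2 -Mk mulVf.
rewrite normB (bigD1 k) //= big1 => [|i ik]; last by rewrite dotcZr E_orth // mulr0 expr2 mulr0.
by rewrite addr0 dotcZr -Mk exprMn t2 expr2 mulKf.
Qed.

Lemma mxpowS {R : realType} {d : nat} (M : 'M[R]_d) k : mxpow M k.+1 = M *m mxpow M k.
Proof. by []. Qed.

Lemma mxpow_row_eigen {R : realType} {d : nat} (M : 'M[R]_d) (w : 'rV[R]_d) (l : R) k :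
  w *m M = l *: w -> w *m mxpow M k = l ^+ k *: w.
Proof.
move=> wM; elim: k => [|k IHk]; first by rewrite /mxpow /= mulmx1 expr0 scale1r.
by rewrite mxpowS mulmxA wM -scalemxAl IHk scalerA -exprS.
Qed.

Section PrincipalAngles.
Context {R : realType} {n1 n2 d : nat} {X1 : 'M[R]_(n1, d)} {X2 : 'M[R]_(n2, d)}.
Context {Xp1 : 'M[R]_(d, n1)} {Xp2 : 'M[R]_(d, n2)}.
Hypotheses (HX1 : is_pinv X1 Xp1) (HX2 : is_pinv X2 Xp2).
Local Notation r := (minn (\rank X1) (\rank X2)).
Context {u v : 'I_r -> 'cV[R]_d}.
Hypothesis PV : principal_vectors X1 X2 u v.
Local Notation c i := (dotc (u i) (v i)).
Local Notation Q1 := (Xp1 *m X1).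
Local Notation Q2 := (Xp2 *m X2).
Local Notation P1 := (1%:M - Xp1 *m X1).
Local Notation P2 := (1%:M - Xp2 *m X2).

Lemma principal_u_sub i : ((u i)^T <= X1)%MS.
Proof. by case: (PV i). Qed.

Lemma principal_v_sub i : ((v i)^T <= X2)%MS.
Proof. by case: (PV i). Qed.

Lemma principal_u_orthonormal i j : dotc (u i) (u j) = (i == j)%:R.
Proof.
apply: orthonormal_of_prev => [k|k l lk]; first by case: (PV k) => _ _ [/vnorm_eq1].
by case: (PV k) => _ _ _ /(_ l lk)[].
Qed.

Lemma principal_v_orthonormal i j : dotc (v i) (v j) = (i == j)%:R.
Proof.
apply: orthonormal_of_prev => [k|k l lk]; first by case: (PV k) => _ _ [_ /vnorm_eq1].
by case: (PV k) => _ _ _ /(_ l lk)[].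
Qed.

Lemma principal_max_sqr (i : 'I_r) x y : (x^T <= X1)%MS -> (y^T <= X2)%MS ->
  (forall j : 'I_r, (j < i)%N -> dotc x (u j) = 0 /\ dotc y (v j) = 0) ->
  dotc x y ^+ 2 <= c i ^+ 2 * dotc x x * dotc y y.
Proof.
rewrite -[c i ^+ 2]real_normK ?num_real //.
apply: (dotc_sqr_le_homog X1 X2
  (fun x y => forall j : 'I_r, (j < i)%N -> dotc x (u j) = 0 /\ dotc y (v j) = 0)).
- by move=> a b x' y' _ _ xy' j ji; rewrite !dotcZl; have [-> ->] := xy' j ji; rewrite !mulr0.
- by move=> x' y' ? ? ? ?; case: (PV i) => _ _ _ _; apply.
Qed.

Lemma principal_max_sqr_sym (i : 'I_r) x y : (x^T <= X2)%MS -> (y^T <= X1)%MS ->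
  (forall j : 'I_r, (j < i)%N -> dotc x (v j) = 0 /\ dotc y (u j) = 0) ->
  dotc x y ^+ 2 <= dotc (v i) (u i) ^+ 2 * dotc x x * dotc y y.
Proof.
move=> xX2 yX1 xy_perp; rewrite dotcC (dotcC (v i)) mulrAC.
by apply: principal_max_sqr => // j ji; have [? ?] := xy_perp j ji.
Qed.

Lemma principal_dotc_uv i j : dotc (u i) (v j) = c j * (i == j)%:R.
Proof.
rewrite -principal_u_orthonormal.
exact: (principal_dotc_rowspace principal_u_sub principal_v_sub principal_u_orthonormal
  principal_v_orthonormal principal_max_sqr _ _ (principal_u_sub i)).
Qed.

Lemma principal_proj1 i : Q1 *m v i = c i *: u i.
Proof.
apply: (pinv_proj_eq HX1 (principal_u_sub i)) => z zX1.
exact: (principal_dotc_rowspace principal_u_sub principal_v_sub principal_u_orthonormal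
  principal_v_orthonormal principal_max_sqr _ _ zX1).
Qed.

Lemma principal_proj2 i : Q2 *m u i = c i *: v i.
Proof.
apply: (pinv_proj_eq HX2 (principal_v_sub i)) => z zX2; rewrite (dotcC (u i)).
exact: (principal_dotc_rowspace principal_v_sub principal_u_sub principal_v_orthonormal
  principal_u_orthonormal principal_max_sqr_sym _ _ zX2).
Qed.

(* One of the two families spans its row space because r is the smaller rank. *)
Lemma principal_proj_mul : Q1 *m Q2 = \sum_(i < r) c i *: (u i *m (v i)^T).
Proof.
have [rk1|rk2] := boolP (\rank X1 <= \rank X2)%N.
  rewrite (pinv_proj_orthonormal HX1 principal_u_sub principal_u_orthonormal); last first.
    by rewrite leq_min leqnn rk1.
  rewrite mulmx_suml; apply: eq_bigr => i _.
  by rewrite -mulmxA -(pinv_proj_sym HX2) -trmx_mul principal_proj2 linearZ /= scalemxAr.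
rewrite (pinv_proj_orthonormal HX2 principal_v_sub principal_v_orthonormal); last first.
  by rewrite leq_min leqnn andbT ltnW // ltnNge.
rewrite mulmx_sumr; apply: eq_bigr => i _.
by rewrite mulmxA principal_proj1 scalemxAl.
Qed.

Lemma principal_P1u i : P1 *m u i = 0.
Proof. by rewrite mulmxBl mul1mx (pinv_proj_fix HX1 _ (principal_u_sub i)) subrr. Qed.

Lemma principal_P1v i : P1 *m v i = v i - c i *: u i.
Proof. by rewrite mulmxBl mul1mx principal_proj1. Qed.

Lemma principal_P2u i : P2 *m u i = u i - c i *: v i.
Proof. by rewrite mulmxBl mul1mx principal_proj2. Qed.

Lemma principal_P2v i : P2 *m v i = 0.
Proof. by rewrite mulmxBl mul1mx (pinv_proj_fix HX2 _ (principal_v_sub i)) subrr. Qed.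

Lemma principal_P1v_dotc i j :
  dotc (P1 *m v i) (P1 *m v j) = (i == j)%:R * (1 - c i ^+ 2).
Proof.
rewrite !principal_P1v dotcBl !dotcBr !dotcZl !dotcZr (dotcC (v i) (u j)).
rewrite (principal_dotc_uv j i) (principal_dotc_uv i j).
rewrite principal_u_orthonormal principal_v_orthonormal.
by have [->|_] := eqVneq i j; rewrite /=; ring.
Qed.

Lemma principal_P1v_eigen i :
  (P1 *m v i)^T *m (P2 *m P1) = c i ^+ 2 *: (P1 *m v i)^T.
Proof.
apply: trmx_inj; rewrite linearZ /= trmxK trmx_mul trmxK trmx_mul.
rewrite (coproj_sym HX1) (coproj_sym HX2) -mulmxA principal_P1v.
rewrite mulmxBr -scalemxAr principal_P2v principal_P2u sub0r.
rewrite mulmxN -scalemxAr mulmxBr -scalemxAr principal_P1u principal_P1v.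
by rewrite sub0r scalerN opprK scalerA expr2.
Qed.

Lemma principal_power_outer k :
  (1%:M - P1) *m mxpow (P2 *m P1) k.+1 =
  \sum_(i < r) u i *m (- (c i * (c i ^+ 2) ^+ k) *: (P1 *m v i))^T.
Proof.
have -> : 1%:M - P1 = Q1 by rewrite opprB addrC subrK.
have Q1P2 : Q1 *m P2 = Q1 - Q1 *m Q2 by rewrite mulmxBr mulmx1.
have Q1P1 : Q1 *m P1 = 0 by rewrite mulmxBr mulmx1 (pinv_proj_idem HX1) subrr.
have Q1P2P1 : Q1 *m (P2 *m P1) = - (Q1 *m Q2 *m P1).
  by rewrite [LHS]mulmxA Q1P2 mulmxBl Q1P1 sub0r.
have vP1_pow i : (v i)^T *m P1 *m mxpow (P2 *m P1) k = (c i ^+ 2) ^+ k *: (P1 *m v i)^T.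
  rewrite -{1}(coproj_sym HX1) -trmx_mul.
  exact: mxpow_row_eigen (principal_P1v_eigen i).
rewrite mxpowS mulmxA Q1P2P1 mulNmx principal_proj_mul !mulmx_suml -sumrN.
apply: eq_bigr => i _.
rewrite -!scalemxAl -!mulmxA (mulmxA (v i)^T) vP1_pow.
by rewrite -scalemxAr scalerA [in RHS]linearZ /= -scalemxAr scaleNr.
Qed.

Lemma principal_cos_le1 i : `|c i| <= 1.
Proof.
rewrite -(expr_le1 (n := 2)) // real_normK ?num_real //.
have := dotc_CauchySchwarz (u i) (v i).
by rewrite principal_u_orthonormal principal_v_orthonormal eqxx mulr1.
Qed.

Lemma cos_principal_angle i : cos (principal_angle u v i) = `|c i|.
Proof.
rewrite /principal_angle acosK // in_itv /= principal_cos_le1 andbT.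
by apply: le_trans (normr_ge0 _); rewrite lerN10.
Qed.

Lemma principal_angle_eq0 i : ~~ (0 < principal_angle u v i) -> c i ^+ 2 = 1.
Proof.
rewrite -leNgt => angle_le0.
have : principal_angle u v i = 0.
  apply/eqP; rewrite eq_le angle_le0 acos_ge0 // principal_cos_le1 andbT.
  by apply: le_trans (normr_ge0 _); rewrite lerN10.
move/(congr1 cos); rewrite cos0 cos_principal_angle -real_normK ?num_real // => ->.
by rewrite expr1n.
Qed.

Lemma principal_bigmax m :
  \big[Num.max/0]_(i | 0 < principal_angle u v i)
     ((cos (principal_angle u v i) ^+ 2) ^+ m * (1 - cos (principal_angle u v i) ^+ 2))
  = \big[Num.max/0]_(i < r) ((c i ^+ 2) ^+ m * (1 - c i ^+ 2)).
Proof.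
rewrite bigmax_mkcond; apply: eq_bigr => i _.
rewrite cos_principal_angle real_normK ?num_real //.
by case: ifPn => // /principal_angle_eq0 ->; rewrite subrr mulr0.
Qed.

End PrincipalAngles.

Theorem mainTheorem9 (R : realType) (n1 n2 d : nat)
  (X1 : 'M[R]_(n1, d)) (X2 : 'M[R]_(n2, d))
  (Xp1 : 'M[R]_(d, n1)) (Xp2 : 'M[R]_(d, n2)) :
  is_pinv X1 Xp1 -> is_pinv X2 Xp2 ->
  forall u v : 'I_(minn (\rank X1) (\rank X2)) -> 'cV[R]_d,
  principal_vectors X1 X2 u v ->
  forall n : nat, (1 <= n)%N ->
  let P1 := 1%:M - Xp1 *m X1 in
  let P2 := 1%:M - Xp2 *m X2 in
  specnorm ((1%:M - P1) *m mxpow (P2 *m P1) n) ^+ 2 =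
  \big[Num.max/0]_(i | 0 < principal_angle u v i)
     ((cos (principal_angle u v i) ^+ 2) ^+ (2 * n - 1)
      * (1 - cos (principal_angle u v i) ^+ 2)).
Proof.
move=> HX1 HX2 u v PV [//|k] _ P1 P2.
rewrite /P1 /P2 (principal_power_outer HX1 HX2 PV) specnorm_outer_orthogonal => [||i j ij].
- rewrite (principal_bigmax PV); apply: eq_bigr => i _.
  rewrite dotcZl dotcZr (principal_P1v_dotc HX1 PV) eqxx mul1r.
  have -> : (2 * k.+1 - 1 = k + k + 1)%N by lia.
  by rewrite !exprD; ring.
- exact: (principal_u_orthonormal PV).
- by rewrite dotcZl dotcZr (principal_P1v_dotc HX1 PV) (negbTE ij) mul0r !mulr0.
Qed.
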